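(* Fix $\epsilon_2>0$ and $(u_\pm,v_\pm)$ with $v_\pm>0$ and $u_+<u_--2\epsilon_2$. Then there exists $\epsilon_0>0$ such that for every $0<\epsilon_1<\epsilon_0$ the state $(u_+,v_+)$ lies in the region $S_1S_2(u_-,v_-)$, i.e., the Riemann problem of the perturbed Brio system with data $(u_\pm,v_\pm)$ is solved by a backward shock $S_1$ followed by a forward shock $S_2$.
   Context: Perturbed Brio system: $u_t+(\tfrac12u^2+\tfrac12\epsilon_1v^2)_x=0$, $v_t+(uv-\epsilon_2v)_x=0$, $\epsilon_1,\epsilon_2>0$, $v>0$. Backward shock curve from $(u_-,v_-)$: $u=u_-+(v-v_-)\frac{\epsilon_2-\sqrt{\epsilon_2^2+4\epsilon_1(v+v_-)^2}}{v+v_-}$, $v>v_-$; forward shock curve: $u=u_-+(v-v_-)\frac{\epsilon_2+\sqrt{\epsilon_2^2+4\epsilon_1(v+v_-)^2}}{v+v_-}$, $0<v<v_-$. Being in $S_1S_2(u_-,v_-)$ means there is an intermediate state $(u_*,v_* )$ on the backward shock curve from $(u_-,v_-)$ such that $(u_+,v_+)$ lies on the forward shock curve from $(u_*,v_* )$. *)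

From Stdlib Require Import Reals.
Open Scope R_scope.

Definition backward_shock (e1 e2 um vm u v : R) : Prop :=
  v > vm /\
  u = um + (v - vm) * ((e2 - sqrt (e2 ^ 2 + 4 * e1 * (v + vm) ^ 2)) / (v + vm)).

Definition forward_shock (e1 e2 um vm u v : R) : Prop :=
  0 < v /\ v < vm /\
  u = um + (v - vm) * ((e2 + sqrt (e2 ^ 2 + 4 * e1 * (v + vm) ^ 2)) / (v + vm)).

Definition in_S1S2 (e1 e2 um vm up vp : R) : Prop :=
  exists us vs : R,
    backward_shock e1 e2 um vm us vs /\ forward_shock e1 e2 us vs up vp.

From Stdlib Require Import Reals Lra Psatz Ranalysis5.
Open Scope R_scope.

(* Put t := sqrt e1.  A state (u_s,v_s) is reached from (u-,v-)
   by a backward shock and then connected to (u+,v+) by a forward shock as soon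
   as v_s > max(v-,v+) and the two jumps in u add up to u+ - u-; the jumps are
   the functions [backward_jump] and [forward_jump] of the intermediate v_s.
   Their common ingredient sqrt(e2^2 + 4 e1 X^2) lies between max(e2, 2tX) and
   e2 + 2tX, which gives explicit two-sided bounds on both jumps.  From these:
   at v_s = v- + v+ the total jump exceeds -2 e2 once t is small enough (the
   forward jump alone exceeds -2 e2 v-/(v- + 2 v+) > -2 e2 as t -> 0), while for
   v_s large the total jump is at most -2t(v_s - v+), hence below u+ - u-.  Since
   u+ - u- < -2 e2, the intermediate value theorem on the (continuous) total
   jump yields the intermediate state.  The threshold is e0 = c^2 with
   c = 2 e2 v+ / ((v- + v+)(v- + 2 v+)). *)

Lemma shock_root_bounds (e1 e2 X : R) :
  0 <= e1 -> 0 <= e2 -> 0 <= X ->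
  e2 <= sqrt (e2 ^ 2 + 4 * e1 * X ^ 2) /\
  2 * sqrt e1 * X <= sqrt (e2 ^ 2 + 4 * e1 * X ^ 2) /\
  sqrt (e2 ^ 2 + 4 * e1 * X ^ 2) <= e2 + 2 * sqrt e1 * X.
Proof.
  intros He1 He2 HX.
  set (t := sqrt e1).
  assert (Ht : 0 <= t) by apply sqrt_pos.
  assert (Htt : e1 = t * t) by (symmetry; apply sqrt_sqrt; lra).
  assert (HtX : 0 <= t * X) by nra.
  rewrite Htt.
  split; [| split].
  - rewrite <- (sqrt_pow2 e2) at 1 by lra. apply sqrt_le_1_alt. nra.
  - rewrite <- (sqrt_pow2 (2 * t * X)) at 1 by nra. apply sqrt_le_1_alt. nra.
  - rewrite <- (sqrt_pow2 (e2 + 2 * t * X)) by nra. apply sqrt_le_1_alt. nra.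
Qed.

Definition backward_jump (e1 e2 vm v : R) : R :=
  (v - vm) * ((e2 - sqrt (e2 ^ 2 + 4 * e1 * (v + vm) ^ 2)) / (v + vm)).

Definition forward_jump (e1 e2 vp v : R) : R :=
  (vp - v) * ((e2 + sqrt (e2 ^ 2 + 4 * e1 * (vp + v) ^ 2)) / (vp + v)).

Lemma backward_jump_bounds (e1 e2 vm v : R) :
  0 <= e1 -> 0 <= e2 -> 0 < vm -> vm < v ->
  - 2 * sqrt e1 * (v - vm) <= backward_jump e1 e2 vm v <= 0.
Proof.
  intros He1 He2 Hvm Hv. unfold backward_jump.
  destruct (shock_root_bounds e1 e2 (v + vm) He1 He2 ltac:(lra)) as [Hlo [_ Hhi]].
  set (s := sqrt (e2 ^ 2 + _)) in *.
  set (q := (e2 - s) / (v + vm)).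
  assert (Hq : q * (v + vm) = e2 - s) by (unfold q; field; lra).
  assert (q <= 0) by nra.
  assert (- 2 * sqrt e1 <= q) by nra.
  split; nra.
Qed.

Lemma forward_jump_bounds (e1 e2 vp v : R) :
  0 <= e1 -> 0 <= e2 -> 0 < vp -> vp < v ->
  - 2 * e2 * ((v - vp) / (vp + v)) - 2 * sqrt e1 * (v - vp)
    <= forward_jump e1 e2 vp v <= - 2 * sqrt e1 * (v - vp).
Proof.
  intros He1 He2 Hvp Hv. unfold forward_jump.
  destruct (shock_root_bounds e1 e2 (vp + v) He1 He2 ltac:(lra)) as [_ [Hlo Hhi]].
  set (s := sqrt (e2 ^ 2 + _)) in *.
  assert (Hsplit : (vp - v) * ((e2 + s) / (vp + v))
                   = - e2 * ((v - vp) / (vp + v)) - (v - vp) * (s / (vp + v)))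
    by (field; lra).
  assert (Hs : s / (vp + v) * (vp + v) = s) by (field; lra).
  assert (Hr : 0 <= (v - vp) / (vp + v)) 
    by (apply Rle_mult_inv_pos; lra).
  assert (2 * sqrt e1 <= s / (vp + v)).
  { apply Rmult_le_reg_r with (vp + v); [lra |]. rewrite Hs. lra. }
  assert (s / (vp + v) <= e2 / (vp + v) + 2 * sqrt e1).
  { apply Rmult_le_reg_r with (vp + v); [lra |].
    rewrite Rmult_plus_distr_r, Hs.
    replace (e2 / (vp + v) * (vp + v)) with e2 by (field; lra). nra. }
  assert (He : (v - vp) * (e2 / (vp + v)) = e2 * ((v - vp) / (vp + v)))
    by (field; lra).
  rewrite Hsplit. split; nra.
Qed.

Definition total_jump (e1 e2 vm vp v : R) : R :=
  backward_jump e1 e2 vm v + forward_jump e1 e2 vp v.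

Lemma in_S1S2_of_total_jump (e1 e2 um vm up vp v : R) :
  0 < vp -> vm < v -> vp < v -> up - um = total_jump e1 e2 vm vp v ->
  in_S1S2 e1 e2 um vm up vp.
Proof.
  intros Hvp Hvm Hv Hjump. unfold total_jump, forward_jump in Hjump.
  exists (um + backward_jump e1 e2 vm v), v.
  split; split; [lra | reflexivity | lra | split; [lra | lra]].
Qed.

Lemma total_jump_continuous (e1 e2 vm vp v : R) :
  0 <= e1 -> 0 < vm -> 0 < vp -> 0 < v ->
  continuity_pt (total_jump e1 e2 vm vp) v.
Proof.
  intros He1 Hvm Hvp Hv.
  unfold total_jump, backward_jump, forward_jump. reg; try lra.
  all: apply Rplus_le_le_0_compat;
       [apply pow2_ge_0 | apply Rmult_le_pos; [lra | apply pow2_ge_0]].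
Qed.

Lemma total_jump_at_sum (e1 e2 vm vp : R) :
  0 <= e1 -> 0 <= e2 -> 0 < vm -> 0 < vp ->
  sqrt e1 * ((vm + vp) * (vm + 2 * vp)) < 2 * e2 * vp ->
  - 2 * e2 < total_jump e1 e2 vm vp (vm + vp).
Proof.
  intros He1 He2 Hvm Hvp Hsmall. unfold total_jump.
  destruct (backward_jump_bounds e1 e2 vm (vm + vp)) as [HB _]; try lra.
  destruct (forward_jump_bounds e1 e2 vp (vm + vp)) as [HF _]; try lra.
  replace ((vm + vp - vp) / (vp + (vm + vp))) with (vm / (vm + 2 * vp)) in HF
    by (field; lra).
  assert (Hfrac : vm / (vm + 2 * vp) * (vm + 2 * vp) = vm) by (field; lra).
  assert (2 * sqrt e1 * (vm + vp) + 2 * e2 * (vm / (vm + 2 * vp)) < 2 * e2).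
  { apply Rmult_lt_reg_r with (vm + 2 * vp); [lra |]. nra. }
  nra.
Qed.

(* For e1 > 0 the total jump is unbounded below on v_s > v- + v+: it lies
   under the line -2 sqrt(e1) (v_s - v+). *)
Lemma total_jump_unbounded_below (e1 e2 vm vp K : R) :
  0 < e1 -> 0 <= e2 -> 0 < vm -> 0 < vp -> 0 < K ->
  exists v : R, vm + vp < v /\ total_jump e1 e2 vm vp v < - K.
Proof.
  intros He1 He2 Hvm Hvp HK.
  set (t := sqrt e1).
  assert (Ht : 0 < t) by (apply sqrt_lt_R0; lra).
  assert (HKt : K / (2 * t) * (2 * t) = K) by (field; lra).
  assert (0 < K / (2 * t)) by (apply Rdiv_lt_0_compat; lra).
  exists (vm + vp + K / (2 * t) + 1). split; [lra |].
  set (v := vm + vp + K / (2 * t) + 1).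
  destruct (backward_jump_bounds e1 e2 vm v) as [_ HB]; try (unfold v; lra).
  destruct (forward_jump_bounds e1 e2 vp v) as [_ HF]; try (unfold v; lra).
  change (sqrt e1) with t in HF.
  assert (Hslope : - 2 * t * (v - vp) < - K) by (unfold v; nra).
  unfold total_jump. lra.
Qed.

Theorem lemma6p1 (e2 um vm up vp : R) :
  0 < e2 -> 0 < vm -> 0 < vp -> up < um - 2 * e2 ->
  exists e0 : R, 0 < e0 /\
    forall e1 : R, 0 < e1 -> e1 < e0 -> in_S1S2 e1 e2 um vm up vp.
Proof.
  intros He2 Hvm Hvp Hup.
  set (c := 2 * e2 * vp / ((vm + vp) * (vm + 2 * vp))).
  assert (Hc : 0 < c) by (apply Rdiv_lt_0_compat; nra).
  exists (c ^ 2). split; [nra |].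
  intros e1 He1 He1c.
  assert (Hsmall : sqrt e1 * ((vm + vp) * (vm + 2 * vp)) < 2 * e2 * vp).
  { assert (sqrt e1 < c).
    { rewrite <- (sqrt_pow2 c) by lra. apply sqrt_lt_1_alt. lra. }
    replace (2 * e2 * vp) with (c * ((vm + vp) * (vm + 2 * vp)))
      by (unfold c; field; nra).
    apply Rmult_lt_compat_r; nra. }
  destruct (total_jump_unbounded_below e1 e2 vm vp (um - up))
    as [vfar [Hfar Hhigh]]; try lra.
  assert (Hlow := total_jump_at_sum e1 e2 vm vp ltac:(lra) ltac:(lra) Hvm Hvp Hsmall).
  set (g := fun v => up - um - total_jump e1 e2 vm vp v).
  destruct (IVT_interv g (vm + vp) vfar) as [v [[Hv _] Hroot]];
    unfold g in *; try lra.
  - intros a [Ha _].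
    apply continuity_pt_minus; [apply continuity_pt_const; intros ? ?; reflexivity |].
    apply total_jump_continuous; lra.
  - apply (in_S1S2_of_total_jump e1 e2 um vm up vp v); lra.
Qed.
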